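(* Let $k$ and $M$ be positive integers, and let $M=p_{1}^{e_{1}}p_{2}^{e_{2}}\cdots p_{l}^{e_{l}}$ be the prime factorization of $M$, where $p_1,\dots,p_l$ are distinct primes. For any integers $n,m\geq \max\{e_j \mid 1\leq j\leq l\}$ satisfying $n\equiv m \pmod{\varphi(M)}$, we have \[ B^{(-k)}_{n}\equiv B^{(-k)}_{m}\pmod{M}. \]
   Context: For any integer $k$, let $\mathrm{Li}_k(t)=\sum_{n=1}^{\infty} t^n/n^k$. The poly-Bernoulli numbers $B^{(k)}_n$ ($n\ge 0$) are defined by the generating series $\frac{\mathrm{Li}_k(1-e^{-t})}{1-e^{-t}}=\sum_{n=0}^{\infty}B^{(k)}_n\frac{t^n}{n!}$. For negative upper index these are integers. $\varphi$ denotes Euler's totient function. *)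

From HB Require Import structures.
From mathcomp Require Import all_boot all_order all_algebra.
Set Implicit Arguments. Unset Strict Implicit. Unset Printing Implicit Defensive.
Import Order.TTheory GRing.Theory Num.Theory.
Local Open Scope ring_scope.

(* Truncation to degree n of the formal power series 1 - e^{-t}
   = sum_{i>=1} (-1)^(i+1) t^i / i!, with rational coefficients. *)
Definition one_minus_exp_neg (n : nat) : {poly rat} :=
  \poly_(i < n.+1) (if i == 0%N then 0 else (- (-1) ^+ i) / (i`!)%:R).

(* Poly-Bernoulli numbers with negative upper index -k (k : nat):
   Li_{-k}(x)/x = sum_{m>=0} (m+1)^k x^m, so
   Li_{-k}(1-e^{-t})/(1-e^{-t}) = sum_{m>=0} (m+1)^k (1-e^{-t})^m
   (a well-defined formal power series since 1-e^{-t} has zero constant term;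
   only m <= n contributes to the coefficient of t^n).
   polyBernNeg k n = B_n^{(-k)} = n! * [t^n] of this series. *)
Definition polyBernNeg (k n : nat) : rat :=
  (n`!)%:R *
  (\sum_(m < n.+1) ((m.+1) ^ k)%:R *: (one_minus_exp_neg n) ^+ m)`_n.

From HB Require Import structures.
From mathcomp Require Import all_boot all_order all_algebra.
From mathcomp Require Import cyclic ring zify.
Set Implicit Arguments. Unset Strict Implicit. Unset Printing Implicit Defensive.
Import Order.TTheory GRing.Theory Num.Theory.

(* Expanding Li_{-k}(x)/x = sum_m (m+1)^k x^m and each (1 - e^{-t})^m by the
   binomial theorem gives, for every N >= n,
     B_n^{(-k)} = sum_{m <= N} (m+1)^k sum_{i <= m} (-1)^i C(m,i) (-i)^n,
   because the inner sum is n! times the t^n-coefficient of (1 - e^{-t})^m,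
   which vanishes for m > n.  With N >= n, n' the two numbers therefore differ
   by an integer combination of the a^n - a^n', and a^n = a^n' mod M for every
   integer a: modulo a prime power p^e || M, either p | a and both powers
   vanish since n, n' >= e, or a is a unit and Euler's theorem applies since
   phi(p^e) | phi(M) | n' - n. *)

Lemma leq_logn_bigmax (M p : nat) : (logn p M <= \max_(q < M.+1) logn q M)%N.
Proof.
have [pM | Mp] := ltnP p M.+1; last by rewrite ltn_log0.
exact: (@leq_bigmax _ (fun q : 'I_M.+1 => logn q M) (Ordinal pM)).
Qed.

Lemma expnD_totient_mod (M n d a : nat) : 0 < M -> 0 < a ->
  (forall p, logn p M <= n) -> totient M %| d -> a ^ (n + d) = a ^ n %[mod M].
Proof.
move=> M_gt0 a_gt0 logM_le totM_d.
apply/eqP; rewrite eqn_mod_dvd ?leq_pexp2l ?leq_addr //.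
rewrite expnD -{2}[a ^ n]muln1 -mulnBr.
apply/(dvdn_partP _ M_gt0) => p; rewrite mem_primes => /and3P[p_pr _ _].
have [p_a | p'a] := boolP (p %| a).
  apply: dvdn_mulr; rewrite p_part.
  by apply: dvdn_trans (dvdn_exp2r n p_a); rewrite dvdn_Pexp2l ?prime_gt1.
apply: dvdn_mull; rewrite -eqn_mod_dvd ?expn_gt0 ?a_gt0 //.
have a_Mp : coprime a M`_p by rewrite p_part coprimeXr // coprime_sym prime_coprime.
have /dvdnP[c ->] : totient M`_p %| d.
  apply: dvdn_trans totM_d.
  by rewrite -{2}(partnC p M_gt0) totient_coprime ?coprime_partC ?dvdn_mulr.
by rewrite mulnC expnM -modnXm (Euler_exp_totient a_Mp) modnXm exp1n.
Qed.

Local Open Scope ring_scope.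

Lemma dvdz_exprB_totient (M n n' : nat) (a : int) : (0 < M)%N ->
  (forall p, logn p M <= n)%N -> (forall p, logn p M <= n')%N ->
  n = n' %[mod totient M] -> (M%:Z %| a ^+ n - a ^+ n')%Z.
Proof.
move=> M_gt0; wlog le_nn' : n n' / (n <= n')%N => [hwlog logM_n logM_n' eq_nn'|].
  have [/hwlog -> // | /ltnW/hwlog] := leqP n n'.
  by rewrite -opprB rpredN; apply.
move=> logM_n _ /eqP; rewrite eq_sym eqn_mod_dvd // => totM_d.
set b : nat := (`|(a %% M)%Z| + M)%N.
have a_b : (a = b %[mod M])%Z.
  by rewrite PoszD gez0_abs ?modz_ge0 ?modzDr ?modz_mod // eqz_nat -lt0n.
have b_gt0 : (0 < b)%N by rewrite addn_gt0 M_gt0 orbT.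
have := expnD_totient_mod M_gt0 b_gt0 logM_n totM_d; rewrite subnKC // => b_nn'.
rewrite -eqz_mod_dvd; apply/eqP.
rewrite -[LHS]modzXm -[RHS]modzXm a_b !modzXm -!natz -!natrX !natz !modz_nat.
by rewrite b_nn'.
Qed.

Lemma fact_neq0 (R : numDomainType) n : (n`!)%:R != 0 :> R.
Proof. by rewrite pnatr_eq0 -lt0n fact_gt0. Qed.

Lemma exprDn_div_fact (R : numFieldType) (x y : R) n :
  (x + y) ^+ n / (n`!)%:R =
  \sum_(j < n.+1) x ^+ j / (j`!)%:R * (y ^+ (n - j) / ((n - j)`!)%:R).
Proof.
rewrite addrC exprDn mulr_suml; apply: eq_bigr => -[j /=]; rewrite ltnS => le_jn _.
rewrite -(bin_fact le_jn) -mulr_natr !natrM; field.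
by rewrite !fact_neq0 pnatr_eq0 -lt0n bin_gt0 le_jn.
Qed.

Definition exp_trunc (R : numFieldType) (c : R) (N : nat) : {poly R} :=
  \poly_(j < N.+1) (c ^+ j / (j`!)%:R).

Lemma coef_exp_trunc_pow (R : numFieldType) (c : R) N i n : (n <= N)%N ->
  (exp_trunc c N ^+ i)`_n = (c * i%:R) ^+ n / (n`!)%:R.
Proof.
elim: i n => [|i IHi] n le_nN.
  by rewrite expr0 coef1 mulr0 expr0n; case: n le_nN => [|n] _; rewrite ?divr1 ?mul0r.
rewrite exprSr coefM -[i.+1]addn1 natrD mulrDr mulr1 exprDn_div_fact.
apply: eq_bigr => -[j /=]; rewrite ltnS => le_jn _.
rewrite IHi ?coef_poly; last exact: leq_trans le_jn le_nN.
by rewrite ltnS (leq_trans (leq_subr _ _) le_nN).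
Qed.

Lemma one_minus_exp_negE N : one_minus_exp_neg N = 1 - exp_trunc (-1) N.
Proof.
apply/polyP => i; rewrite coefB coef1 !coef_poly.
case: i => [|i] /=; first by rewrite subrr.
by case: ltnP; rewrite ?sub0r ?subr0 ?mulNr.
Qed.

Lemma coef_pow_eq0 (R : nzRingType) (p : {poly R}) m n :
  p`_0 = 0 -> (n < m)%N -> (p ^+ m)`_n = 0.
Proof.
move=> p0; elim: m n => [//|m IHm] n lt_nm.
rewrite exprS coefM big1 // => -[[|j] /= lt_jn] _; first by rewrite p0 mul0r.
by rewrite IHm ?mulr0 //; lia.
Qed.

Definition alt_binom_pow (m n : nat) : int :=
  \sum_(i < m.+1) (-1) ^+ i * 'C(m, i)%:Z * (- i%:Z) ^+ n.

Lemma coef_one_minus_exp_neg_pow N m n : (n <= N)%N ->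
  (n`!)%:R * (one_minus_exp_neg N ^+ m)`_n = (alt_binom_pow m n)%:~R.
Proof.
move=> le_nN; rewrite one_minus_exp_negE exprBn coef_sum mulr_sumr rmorph_sum.
apply: eq_bigr => i _; rewrite expr1n mulr1 coefMn.
rewrite -[(-1) ^+ i](rmorph_sign polyC) coefCM coef_exp_trunc_pow //.
rewrite !rmorphM !rmorphXn !rmorphN rmorph1 /= -!pmulrn mulN1r -mulr_natr.
field; exact: fact_neq0.
Qed.

Lemma alt_binom_pow_eq0 m n : (n < m)%N -> alt_binom_pow m n = 0.
Proof.
move=> lt_nm; apply/eqP; rewrite -(intr_eq0 rat).
by rewrite -(coef_one_minus_exp_neg_pow m (leqnn n)) coef_pow_eq0 ?mulr0 ?coef_poly.
Qed.

Definition polyBernNegZ (k N n : nat) : int :=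
  \sum_(m < N.+1) (m.+1 ^ k)%:Z * alt_binom_pow m n.

Lemma polyBernNegE k N n : (n <= N)%N ->
  polyBernNeg k n = (polyBernNegZ k N n)%:~R.
Proof.
move=> le_nN; rewrite /polyBernNeg coef_sum mulr_sumr rmorph_sum.
rewrite (big_ord_widen N.+1
  (fun m => (n`!)%:R * (((m.+1 ^ k)%:R *: one_minus_exp_neg n ^+ m)`_n))) //.
rewrite big_mkcond; apply: eq_bigr => -[m /= _] _.
case: ltnP => [_ | lt_nm]; last by rewrite alt_binom_pow_eq0 ?mulr0.
by rewrite coefZ mulrCA coef_one_minus_exp_neg_pow // rmorphM /= -pmulrn.
Qed.

Lemma dvdz_polyBernNegZ_totient k N M n n' : (0 < M)%N ->
  (forall p, logn p M <= n)%N -> (forall p, logn p M <= n')%N ->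
  n = n' %[mod totient M] ->
  (M%:Z %| polyBernNegZ k N n - polyBernNegZ k N n')%Z.
Proof.
move=> M_gt0 logM_n logM_n' eq_nn'.
rewrite -sumrB; apply: rpred_sum => m _; rewrite -mulrBr dvdz_mull //.
rewrite -sumrB; apply: rpred_sum => i _; rewrite -mulrBr dvdz_mull //.
exact: dvdz_exprB_totient.
Qed.

Theorem corollary2p3 (k M n m : nat) :
  (0 < k)%N -> (0 < M)%N ->
  (\max_(p < M.+1) logn p M <= n)%N ->
  (\max_(p < M.+1) logn p M <= m)%N ->
  n = m %[mod totient M] ->
  exists z : int, polyBernNeg k n - polyBernNeg k m = M%:R * z%:~R.
Proof.
move=> _ M_gt0 max_n max_m eq_nm.
have logM_le e : (\max_(p < M.+1) logn p M <= e)%N -> forall p, (logn p M <= e)%N.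
  by move=> max_e p; apply: leq_trans max_e; apply: leq_logn_bigmax.
have /dvdzP[z Bz] := dvdz_polyBernNegZ_totient k (n + m) M_gt0
  (logM_le _ max_n) (logM_le _ max_m) eq_nm.
exists z; rewrite (polyBernNegE k (leq_addr m n)) (polyBernNegE k (leq_addl n m)).
by rewrite -rmorphB Bz rmorphM /= -pmulrn mulrC.
Qed.
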